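(* Let $\Theta\vdash^\top t$ be a $\beta$-normal $\mathsf{F_{<:}^\top}$ term-in-context and $\Theta\vdash^\top T$ an $\mathsf{F_{<:}^\top}$ type. If $\Theta\vdash t:T$ is derivable in System $\mathsf{F_{<:}^{K\top}}$, then $\Theta\vdash^\top t:T$ is derivable in System $\mathsf{F_{<:}^\top}$.
   Context: System $\mathsf{F_{<:}^{K\top}}$: raw types $T ::= \top \mid X \mid T\to T \mid \forall^{\mathsf K}(X<:T).T \mid \forall^\top(X<:T).T$, up to $\alpha$-conversion. Contexts $\Theta$: finite sequences of $X<:T$ or $x:T$ with distinct variables, each type well-formed over the preceding part. Subtyping $\Theta\vdash S<:T$: (Var) $\Theta,X<:T,\Theta'\vdash X<:T$; (Top) $T<:\top$; (Refl); (Trans); ($\to$) from $S'<:S$, $T<:T'$ infer $S\to T<:S'\to T'$; ($\forall$-Fun) from $\Theta,X<:S\vdash T<:T'$ infer $\forall^{\mathsf K}(X<:S).T<:\forall^{\mathsf K}(X<:S).T'$; ($\forall$-Loc) from $\Theta\vdash T_0<:S_0$, $\Theta,X<:S_0\vdash S_1<:T_1$ infer $\forall^{\mathsf K}(X<:S_0).S_1<:\forall^\top(X<:T_0).T_1$; ($\forall$-Top) from $\Theta\vdash T_0<:S_0$, $\Theta,X<:\top\vdash S_1<:T_1$ infer $\forall^\top(X<:S_0).S_1<:\forall^\top(X<:T_0).T_1$. Raw terms $t ::= \mathsf{top}\mid x\mid\lambda(x:T).t\mid\Lambda(X<:T).t\mid t\,t\mid t\{T\}$. Typing: $\mathsf{top}:\top$;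 $\Theta,x:T,\Theta'\vdash x:T$; (sub) from $t:T$, $T<:T'$ infer $t:T'$; ($\to$-i) from $\Theta,x:S\vdash t:T$ infer $\lambda(x:S).t:S\to T$; ($\to$-e) from $t:S\to T$, $s:S$ infer $t\,s:T$; ($\forall$-i) from $\Theta,X<:S\vdash t:T$ infer $\Theta\vdash\Lambda(X<:S).t:\forall^{\mathsf K}(X<:S).T$; ($\forall$-e) from $\Theta\vdash t:\forall^\top(X<:S).T$ and $\Theta\vdash S'<:S$ infer $\Theta\vdash t\{S'\}:T[S'/X]$. $\mathsf{F_{<:}^\top}$ types, contexts and terms are those in which only $\forall^\top$ occurs. System $\mathsf{F_{<:}^\top}$ (judgements $\vdash^\top$) has subtyping rules Var, Top, Refl, Trans, $\to$, $\forall$-Top only, and the same typing rules except that ($\forall$-i) concludes $\Theta\vdash^\top\Lambda(X<:S).t:\forall^\top(X<:S).T$. A term is $\beta$-normal if it has no subterm of the form $(\lambda(x:S).t)\,s$ or $(\Lambda(X<:S).t)\{R\}$. *)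

(* Syntax of System F_{<:}^{K T} and F_{<:}^T, in de Bruijn
   style with separate index spaces for type variables and term variables
   (as in Vouillon's POPLmark solution).  alpha-conversion is built in. *)
From Stdlib Require Import Arith List.
Import ListNotations.

Inductive quant : Type := QK | QT .

Inductive typ : Type :=
  | Top : typ
  | TVar : nat -> typ
  | Arr : typ -> typ -> typ
  | All : quant -> typ -> typ -> typ.   (* All q S T = forall^q (X <: S). T, X bound as index 0 in T *)

Inductive trm : Type :=
  | ttop : trm
  | var : nat -> trm
  | abs : typ -> trm -> trm     (* lambda (x:T). t, x = term index 0 in t *)
  | tabs : typ -> trm -> trm    (* Lambda (X<:T). t, X = type index 0 in t *)
  | app : trm -> trm -> trm
  | tapp : trm -> typ -> trm.

Inductive binding : Type :=
  | BSub : typ -> binding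
  | BVar : typ -> binding.

(* contexts: head of the list = most recent (rightmost) binding *)
Definition env := list binding.

Fixpoint tshift (c : nat) (T : typ) : typ :=
  match T with
  | Top => Top
  | TVar n => if c <=? n then TVar (S n) else TVar n
  | Arr S1 T1 => Arr (tshift c S1) (tshift c T1)
  | All q S1 T1 => All q (tshift c S1) (tshift (S c) T1)
  end.

Fixpoint tshiftn (k : nat) (T : typ) : typ :=
  match k with 0 => T | S k' => tshift 0 (tshiftn k' T) end.

(* tsubst T k U = T[U/X_k] (capture-avoiding, lowering indices above k) *)
Fixpoint tsubst (T : typ) (k : nat) (U : typ) : typ :=
  match T with
  | Top => Top
  | TVar n => if n <? k then TVar n
              else if n =? k then tshiftn k U else TVar (n - 1)
  | Arr S1 T1 => Arr (tsubst S1 k U) (tsubst T1 k U)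
  | All q S1 T1 => All q (tsubst S1 k U) (tsubst T1 (S k) U)
  end.

Fixpoint ntv (E : env) : nat :=
  match E with [] => 0 | BSub _ :: E' => S (ntv E') | BVar _ :: E' => ntv E' end.
Fixpoint nv (E : env) : nat :=
  match E with [] => 0 | BSub _ :: E' => nv E' | BVar _ :: E' => S (nv E') end.

(* bound of the type variable X, expressed in context E *)
Fixpoint get_bound (E : env) (X : nat) : option typ :=
  match E with
  | [] => None
  | BSub T :: E' => match X with
                    | 0 => Some (tshift 0 T)
                    | S X' => option_map (tshift 0) (get_bound E' X')
                    end
  | BVar _ :: E' => get_bound E' X
  end.

(* type of the term variable x, expressed in context E *)
Fixpoint get_var (E : env) (x : nat) : option typ :=
  match E with
  | [] => None
  | BVar T :: E' => match x with 0 => Some T | S x' => get_var E' x' end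
  | BSub _ :: E' => option_map (tshift 0) (get_var E' x)
  end.

(* Well-formedness over n type variables.  If allowK = false, only
   forall^Top may occur (i.e. F_{<:}^Top types). *)
Fixpoint wf_typ (allowK : bool) (n : nat) (T : typ) : Prop :=
  match T with
  | Top => True
  | TVar X => X < n
  | Arr S1 T1 => wf_typ allowK n S1 /\ wf_typ allowK n T1
  | All q S1 T1 => (allowK = true \/ q = QT) /\ wf_typ allowK n S1 /\ wf_typ allowK (S n) T1
  end.

Fixpoint wf_env (allowK : bool) (E : env) : Prop :=
  match E with
  | [] => True
  | BSub T :: E' => wf_typ allowK (ntv E') T /\ wf_env allowK E'
  | BVar T :: E' => wf_typ allowK (ntv E') T /\ wf_env allowK E'
  end.

Fixpoint wf_trm (allowK : bool) (ntv0 nv0 : nat) (t : trm) : Prop :=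
  match t with
  | ttop => True
  | var x => x < nv0
  | abs T t1 => wf_typ allowK ntv0 T /\ wf_trm allowK ntv0 (S nv0) t1
  | tabs T t1 => wf_typ allowK ntv0 T /\ wf_trm allowK (S ntv0) nv0 t1
  | app t1 t2 => wf_trm allowK ntv0 nv0 t1 /\ wf_trm allowK ntv0 nv0 t2
  | tapp t1 T => wf_trm allowK ntv0 nv0 t1 /\ wf_typ allowK ntv0 T
  end.

Fixpoint beta_normal (t : trm) : Prop :=
  match t with
  | ttop => True
  | var _ => True
  | abs _ t1 => beta_normal t1
  | tabs _ t1 => beta_normal t1
  | app (abs _ _) _ => False
  | app t1 t2 => beta_normal t1 /\ beta_normal t2
  | tapp (tabs _ _) _ => False
  | tapp t1 _ => beta_normal t1
  end.

Inductive subK : env -> typ -> typ -> Prop :=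
  | subK_var : forall E X T, wf_env true E -> get_bound E X = Some T ->
      subK E (TVar X) T
  | subK_top : forall E S1, wf_env true E -> wf_typ true (ntv E) S1 ->
      subK E S1 Top
  | subK_refl : forall E T, wf_env true E -> wf_typ true (ntv E) T ->
      subK E T T
  | subK_trans : forall E S1 T U, subK E S1 T -> subK E T U -> subK E S1 U
  | subK_arrow : forall E S1 S' T T', subK E S' S1 -> subK E T T' ->
      subK E (Arr S1 T) (Arr S' T')
  | subK_all_fun : forall E S1 T T', subK (BSub S1 :: E) T T' ->
      subK E (All QK S1 T) (All QK S1 T')
  | subK_all_loc : forall E S0 S1 T0 T1, subK E T0 S0 ->
      subK (BSub S0 :: E) S1 T1 ->
      subK E (All QK S0 S1) (All QT T0 T1)
  | subK_all_top : forall E S0 S1 T0 T1, subK E T0 S0 ->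
      subK (BSub Top :: E) S1 T1 ->
      subK E (All QT S0 S1) (All QT T0 T1).

Inductive typK : env -> trm -> typ -> Prop :=
  | typK_top : forall E, wf_env true E -> typK E ttop Top
  | typK_var : forall E x T, wf_env true E -> get_var E x = Some T ->
      typK E (var x) T
  | typK_sub : forall E t T T', typK E t T -> subK E T T' -> typK E t T'
  | typK_abs : forall E S1 t T, typK (BVar S1 :: E) t T ->
      typK E (abs S1 t) (Arr S1 T)
  | typK_app : forall E t s S1 T, typK E t (Arr S1 T) -> typK E s S1 ->
      typK E (app t s) T
  | typK_tabs : forall E S1 t T, typK (BSub S1 :: E) t T ->
      typK E (tabs S1 t) (All QK S1 T)
  | typK_tapp : forall E t S1 S' T, typK E t (All QT S1 T) -> subK E S' S1 ->
      typK E (tapp t S') (tsubst T 0 S').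

Inductive subT : env -> typ -> typ -> Prop :=
  | subT_var : forall E X T, wf_env false E -> get_bound E X = Some T ->
      subT E (TVar X) T
  | subT_top : forall E S1, wf_env false E -> wf_typ false (ntv E) S1 ->
      subT E S1 Top
  | subT_refl : forall E T, wf_env false E -> wf_typ false (ntv E) T ->
      subT E T T
  | subT_trans : forall E S1 T U, subT E S1 T -> subT E T U -> subT E S1 U
  | subT_arrow : forall E S1 S' T T', subT E S' S1 -> subT E T T' ->
      subT E (Arr S1 T) (Arr S' T')
  | subT_all_top : forall E S0 S1 T0 T1, subT E T0 S0 ->
      subT (BSub Top :: E) S1 T1 ->
      subT E (All QT S0 S1) (All QT T0 T1).

Inductive typT : env -> trm -> typ -> Prop :=
  | typT_top : forall E, wf_env false E -> typT E ttop Top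
  | typT_var : forall E x T, wf_env false E -> get_var E x = Some T ->
      typT E (var x) T
  | typT_sub : forall E t T T', typT E t T -> subT E T T' -> typT E t T'
  | typT_abs : forall E S1 t T, typT (BVar S1 :: E) t T ->
      typT E (abs S1 t) (Arr S1 T)
  | typT_app : forall E t s S1 T, typT E t (Arr S1 T) -> typT E s S1 ->
      typT E (app t s) T
  | typT_tabs : forall E S1 t T, typT (BSub S1 :: E) t T ->
      typT E (tabs S1 t) (All QT S1 T)
  | typT_tapp : forall E t S1 S' T, typT E t (All QT S1 T) -> subT E S' S1 ->
      typT E (tapp t S') (tsubst T 0 S').

(* Subtyping of F_{<:}^{K Top} is equivalent to the algorithmic system [algsub],
   which has no transitivity rule.  Transitivity is admissible by induction on the
   middle type: the only narrowing it needs (forall-Loc followed by forall-Top)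
   replaces a [Top] bound, and a variable bounded by [Top] is below nothing but [Top].
   Between F_{<:}^Top types in an F_{<:}^Top context an algorithmic derivation uses
   no forall^K rule, so it is an F_{<:}^Top derivation.

   The theorem then follows by induction on the beta-normal term.  A neutral term
   (top, a variable, or an elimination whose head is again neutral: by beta-normality
   and because a lambda has no forall type and a Lambda no arrow type) has an
   F_{<:}^Top type lying algorithmically below each of its F_{<:}^{K Top} types;
   exposing that type as an arrow or a forall^Top type types the elimination in
   F_{<:}^Top.  Abstractions are checked against the given F_{<:}^Top type; for a
   Lambda such a type can only come from forall-Loc, whose body premise under
   [X <: S] is what the F_{<:}^Top rules forall-i and forall-Top need. *)

From Stdlib Require Import Arith List Lia.
Import ListNotations.

Ltac destruct_compare := repeat match goal with
  | |- context [?a <=? ?b] => destruct (Nat.leb_spec a b)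
  | |- context [?a <? ?b] => destruct (Nat.ltb_spec a b)
  | |- context [?a =? ?b] => destruct (Nat.eqb_spec a b)
  end.

Lemma tshift_tshift V : forall c d, d <= c ->
  tshift (S c) (tshift d V) = tshift d (tshift c V).
Proof.
  induction V as [| n | V1 IH1 V2 IH2 | q V1 IH1 V2 IH2]; intros c d Hd; simpl.
  - reflexivity.
  - do 3 (destruct_compare; cbn [tshift]); f_equal; lia.
  - f_equal; auto.
  - f_equal; [apply IH1 | apply IH2]; lia.
Qed.

Lemma tsubst_tshift V : forall c W, tsubst (tshift c V) c W = V.
Proof.
  induction V as [| n | V1 IH1 V2 IH2 | q V1 IH1 V2 IH2]; intros c W; simpl.
  - reflexivity.
  - do 3 (destruct_compare; cbn [tshift tsubst]); f_equal; lia.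
  - f_equal; auto.
  - f_equal; auto.
Qed.

Lemma tshift_tshiftn k : forall c W, c <= k ->
  tshift c (tshiftn k W) = tshiftn (S k) W.
Proof.
  induction k as [|k IH]; intros [|c] W Hc; try lia; try reflexivity.
  simpl tshiftn at 1. rewrite tshift_tshift, IH by lia. reflexivity.
Qed.

Lemma tsubst_tshift_comm T : forall c k W, c <= k ->
  tsubst (tshift c T) (S k) W = tshift c (tsubst T k W).
Proof.
  induction T as [| n | T1 IH1 T2 IH2 | q T1 IH1 T2 IH2]; intros c k W Hc; simpl.
  - reflexivity.
  - do 3 (destruct_compare; cbn [tshift tsubst]); subst; try (f_equal; lia).
    symmetry; apply tshift_tshiftn; lia.
  - f_equal; auto.
  - f_equal; [apply IH1 | apply IH2]; lia.
Qed.

Lemma wf_typ_tshift b T : forall n c, wf_typ b n T -> c <= n ->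
  wf_typ b (S n) (tshift c T).
Proof.
  induction T as [| X | T1 IH1 T2 IH2 | q T1 IH1 T2 IH2]; intros n c HT Hc; simpl in *.
  - exact I.
  - destruct_compare; simpl; lia.
  - split; [apply IH1 | apply IH2]; tauto.
  - split; [tauto | split; [apply IH1 | apply IH2]; (tauto || lia)].
Qed.

Lemma wf_typ_tshiftn b k m U : wf_typ b m U -> wf_typ b (k + m) (tshiftn k U).
Proof.
  intros HU. induction k as [|k IH]; simpl; auto.
  apply wf_typ_tshift; [exact IH | lia].
Qed.

Lemma wf_typ_tsubst b T : forall k m U, wf_typ b (S (k + m)) T -> wf_typ b m U ->
  wf_typ b (k + m) (tsubst T k U).
Proof.
  induction T as [| X | T1 IH1 T2 IH2 | q T1 IH1 T2 IH2]; intros k m U HT HU; simpl in *.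
  - exact I.
  - destruct_compare; simpl; try lia. apply wf_typ_tshiftn; exact HU.
  - split; [apply IH1 | apply IH2]; tauto.
  - split; [tauto | split; [apply IH1 | apply (IH2 (S k))]; tauto].
Qed.

Lemma wf_typ_allowK T : forall n, wf_typ false n T -> wf_typ true n T.
Proof. induction T; simpl; intuition. Qed.

Lemma get_bound_wf b E : forall X T, wf_env b E -> get_bound E X = Some T ->
  wf_typ b (ntv E) T.
Proof.
  induction E as [|[U|U] E IH]; intros X T HE H; simpl in *; try discriminate.
  - destruct X as [|X].
    + injection H as <-. apply wf_typ_tshift; [tauto | lia].
    + destruct (get_bound E X) eqn:Hg; simpl in H; [injection H as <- | discriminate].
      apply wf_typ_tshift; [apply (IH X); tauto | lia].
  - apply (IH X); tauto.
Qed.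

Lemma get_bound_lt E : forall X T, get_bound E X = Some T -> X < ntv E.
Proof.
  induction E as [|[U|U] E IH]; intros X T H; simpl in *; try discriminate.
  - destruct X as [|X]; [lia|].
    destruct (get_bound E X) eqn:Hg; simpl in H; [|discriminate].
    apply IH in Hg; lia.
  - eauto.
Qed.

Lemma get_var_wf b E : forall x T, wf_env b E -> get_var E x = Some T ->
  wf_typ b (ntv E) T.
Proof.
  induction E as [|[U|U] E IH]; intros x T HE H; simpl in *; try discriminate.
  - destruct (get_var E x) eqn:Hg; simpl in H; [injection H as <- | discriminate].
    apply wf_typ_tshift; [apply (IH x); tauto | lia].
  - destruct x as [|x]; [injection H as <-; tauto | apply (IH x); tauto].
Qed.

Lemma ntv_app F E : ntv (F ++ E) = ntv F + ntv E.
Proof. induction F as [|[] F IH]; simpl; auto. Qed.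

Inductive algsub : env -> typ -> typ -> Prop :=
  | algsub_top : forall E S, wf_env true E -> wf_typ true (ntv E) S -> algsub E S Top
  | algsub_refl_tvar : forall E X, wf_env true E -> X < ntv E -> algsub E (TVar X) (TVar X)
  | algsub_tvar : forall E X U T, get_bound E X = Some U -> algsub E U T ->
      algsub E (TVar X) T
  | algsub_arrow : forall E S1 S2 T1 T2, algsub E T1 S1 -> algsub E S2 T2 ->
      algsub E (Arr S1 S2) (Arr T1 T2)
  | algsub_all_fun : forall E S T T', algsub (BSub S :: E) T T' ->
      algsub E (All QK S T) (All QK S T')
  | algsub_all_loc : forall E S0 S1 T0 T1, algsub E T0 S0 -> algsub (BSub S0 :: E) S1 T1 ->
      algsub E (All QK S0 S1) (All QT T0 T1)
  | algsub_all_top : forall E S0 S1 T0 T1, algsub E T0 S0 -> algsub (BSub Top :: E) S1 T1 ->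
      algsub E (All QT S0 S1) (All QT T0 T1).

Lemma algsub_regular E S T : algsub E S T ->
  wf_env true E /\ wf_typ true (ntv E) S /\ wf_typ true (ntv E) T.
Proof.
  induction 1; simpl in *; intuition.
  eapply get_bound_lt; eauto.
Qed.

Lemma algsub_Top_inv E T : algsub E Top T -> T = Top.
Proof. intros H; inversion H; reflexivity. Qed.

Lemma algsub_refl T : forall E, wf_env true E -> wf_typ true (ntv E) T -> algsub E T T.
Proof.
  induction T as [| X | T1 IH1 T2 IH2 | [] T1 IH1 T2 IH2]; intros E HE HT; simpl in HT.
  - apply algsub_top; simpl; auto.
  - apply algsub_refl_tvar; auto.
  - apply algsub_arrow; [apply IH1 | apply IH2]; tauto.
  - apply algsub_all_fun, IH2; simpl; tauto.
  - apply algsub_all_top; [apply IH1 | apply IH2]; simpl; tauto.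
Qed.

Lemma get_bound_mid_top F E : get_bound (F ++ BSub Top :: E) (ntv F) = Some Top.
Proof. induction F as [|[] F IH]; simpl; auto. rewrite IH; reflexivity. Qed.

Lemma get_bound_mid_ne F : forall E P Q X, X <> ntv F ->
  get_bound (F ++ BSub P :: E) X = get_bound (F ++ BSub Q :: E) X.
Proof.
  induction F as [|[] F IH]; intros E P Q X H; simpl in *.
  - destruct X; [lia | reflexivity].
  - destruct X; [reflexivity|]. rewrite (IH E P Q X); auto.
  - auto.
Qed.

Lemma wf_env_narrow b F : forall E P Q, wf_env b (F ++ BSub Q :: E) ->
  wf_typ b (ntv E) P -> wf_env b (F ++ BSub P :: E).
Proof.
  induction F as [|[] F IH]; intros E P Q H HP; simpl in *;
    rewrite ?ntv_app in *; simpl in *; intuition eauto.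
Qed.

Lemma algsub_narrow_top E0 S T : algsub E0 S T -> forall F E P,
  E0 = F ++ BSub Top :: E -> wf_typ true (ntv E) P -> algsub (F ++ BSub P :: E) S T.
Proof.
  induction 1 as [E0 S HE HS | E0 X HE HX | E0 X U T HU HUT IH | E0 S1 S2 T1 T2 _ IH1 _ IH2
                 | E0 S T T' _ IH | E0 S0 S1 T0 T1 _ IH1 _ IH2 | E0 S0 S1 T0 T1 _ IH1 _ IH2];
    intros F E P -> HP.
  - apply algsub_top; [eapply wf_env_narrow; eauto|].
    rewrite ntv_app in *; simpl in *; exact HS.
  - apply algsub_refl_tvar; [eapply wf_env_narrow; eauto|].
    rewrite ntv_app in *; simpl in *; exact HX.
  - destruct (Nat.eq_dec X (ntv F)) as [-> | Hne].
    + rewrite get_bound_mid_top in HU. injection HU as <-.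
      rewrite (algsub_Top_inv _ _ HUT).
      destruct (algsub_regular _ _ _ HUT) as [HE _].
      apply algsub_top; [eapply wf_env_narrow; eauto|].
      rewrite ntv_app; simpl; lia.
    + eapply algsub_tvar; [rewrite (get_bound_mid_ne _ _ _ Top); eauto | eauto].
  - apply algsub_arrow; eauto.
  - apply algsub_all_fun, (IH (BSub S :: F)); auto.
  - apply algsub_all_loc; [eauto | apply (IH2 (BSub S0 :: F)); auto].
  - apply algsub_all_top; [eauto | apply (IH2 (BSub Top :: F)); auto].
Qed.

Lemma algsub_trans Q : forall E S T, algsub E S Q -> algsub E Q T -> algsub E S T.
Proof.
  induction Q as [| X | Q1 IHQ1 Q2 IHQ2 | q Q1 IHQ1 Q2 IHQ2]; intros E S T HSQ HQT.
  - rewrite (algsub_Top_inv _ _ HQT). exact HSQ.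
  - remember (TVar X) as Q eqn:HQ.
    induction HSQ; try discriminate; [exact HQT | eapply algsub_tvar; eauto].
  - destruct T as [| | T1 T2 |]; try (inversion HQT; fail).
    { destruct (algsub_regular _ _ _ HSQ) as (HE & HS & _). apply algsub_top; auto. }
    remember (Arr Q1 Q2) as Q eqn:HQ.
    induction HSQ; try discriminate; [eapply algsub_tvar; eauto |].
    injection HQ as -> ->. inversion HQT; subst. apply algsub_arrow; eauto.
  - destruct T as [| | | r T1 T2]; try (inversion HQT; fail).
    { destruct (algsub_regular _ _ _ HSQ) as (HE & HS & _). apply algsub_top; auto. }
    remember (All q Q1 Q2) as Q eqn:HQ.
    induction HSQ; try discriminate; [eapply algsub_tvar; eauto | ..];
      injection HQ; intros; subst; inversion HQT; subst.
    + apply algsub_all_fun; eauto.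
    + apply algsub_all_loc; eauto.
    + apply algsub_all_loc; [eauto |].
      destruct (algsub_regular _ _ _ HSQ1) as (_ & _ & HS0).
      eapply IHQ2; [exact HSQ2 |].
      refine (algsub_narrow_top _ _ _ _ [] E S0 eq_refl HS0); eassumption.
    + apply algsub_all_top; eauto.
Qed.

Lemma algsub_subK E S T : algsub E S T -> subK E S T.
Proof.
  induction 1 as [| | E X U T HU HUT IH | | | |].
  - apply subK_top; auto.
  - apply subK_refl; auto.
  - apply subK_trans with U; [apply subK_var; auto | exact IH].
    apply (algsub_regular _ _ _ HUT).
  - apply subK_arrow; auto.
  - apply subK_all_fun; auto.
  - apply subK_all_loc; auto.
  - apply subK_all_top; auto.
Qed.

Lemma subK_algsub E S T : subK E S T -> algsub E S T.
Proof.
  induction 1.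
  - eapply algsub_tvar; eauto. apply algsub_refl; auto. eapply get_bound_wf; eauto.
  - apply algsub_top; auto.
  - apply algsub_refl; auto.
  - eapply algsub_trans; eauto.
  - apply algsub_arrow; auto.
  - apply algsub_all_fun; auto.
  - apply algsub_all_loc; auto.
  - apply algsub_all_top; auto.
Qed.

Lemma get_bound_mid_var F : forall E V X,
  get_bound (F ++ BVar V :: E) X = get_bound (F ++ E) X.
Proof.
  induction F as [|[] F IH]; intros E V X; simpl; auto.
  destruct X; auto. rewrite IH; auto.
Qed.

Lemma wf_env_mid_var b F : forall E V, wf_env b (F ++ E) -> wf_typ b (ntv E) V ->
  wf_env b (F ++ BVar V :: E).
Proof.
  induction F as [|[] F IH]; intros E V H HV; simpl in *;
    rewrite ?ntv_app in *; simpl in *; intuition.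
Qed.

Lemma algsub_weaken_var E0 S T : algsub E0 S T -> forall F E V,
  E0 = F ++ E -> wf_typ true (ntv E) V -> algsub (F ++ BVar V :: E) S T.
Proof.
  induction 1 as [E0 S HE HS | E0 X HE HX | E0 X U T HU HUT IH | E0 S1 S2 T1 T2 _ IH1 _ IH2
                 | E0 S T T' _ IH | E0 S0 S1 T0 T1 _ IH1 _ IH2 | E0 S0 S1 T0 T1 _ IH1 _ IH2];
    intros F E V -> HV.
  - apply algsub_top; [apply wf_env_mid_var; auto|].
    rewrite ntv_app in *; exact HS.
  - apply algsub_refl_tvar; [apply wf_env_mid_var; auto|].
    rewrite ntv_app in *; exact HX.
  - eapply algsub_tvar; [rewrite get_bound_mid_var; eauto | eauto].
  - apply algsub_arrow; eauto.
  - apply algsub_all_fun, (IH (BSub S :: F)); auto.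
  - apply algsub_all_loc; [eauto | apply (IH2 (BSub S0 :: F)); auto].
  - apply algsub_all_top; [eauto | apply (IH2 (BSub Top :: F)); auto].
Qed.

(* [env_subst W F] substitutes [W] for the variable bound just below [F]; seen from
   a binding [B :: F'] of [F], that variable has index [ntv F']. *)
Fixpoint env_subst (W : typ) (F : env) : env :=
  match F with
  | [] => []
  | BSub T :: F' => BSub (tsubst T (ntv F') W) :: env_subst W F'
  | BVar T :: F' => BVar (tsubst T (ntv F') W) :: env_subst W F'
  end.

Lemma ntv_env_subst W F : ntv (env_subst W F) = ntv F.
Proof. induction F as [|[] F IH]; simpl; auto. Qed.

Lemma wf_env_subst b W F : forall E, wf_env b (F ++ BSub Top :: E) ->
  wf_typ b (ntv E) W -> wf_env b (env_subst W F ++ E).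
Proof.
  induction F as [|[] F IH]; intros E H HW; simpl in *; [tauto | ..];
    rewrite ntv_app, ntv_env_subst in *; simpl in *;
    (split; [apply wf_typ_tsubst; [rewrite plus_n_Sm |] | apply IH]; tauto).
Qed.

Lemma get_bound_subst W E F : forall X U,
  get_bound (F ++ BSub Top :: E) X = Some U ->
  (X = ntv F /\ U = Top) \/
  exists X', tsubst (TVar X) (ntv F) W = TVar X' /\
    get_bound (env_subst W F ++ E) X' = Some (tsubst U (ntv F) W).
Proof.
  induction F as [|[T|T] F IH]; intros X U H; simpl in *.
  - destruct X as [|X].
    + injection H as <-; auto.
    + right. destruct (get_bound E X) eqn:Hg; simpl in H; [injection H as <- | discriminate].
      exists X. simpl. rewrite Nat.sub_0_r, tsubst_tshift. auto.
  - destruct X as [|X].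
    + injection H as <-. right. exists 0. simpl. rewrite tsubst_tshift_comm by lia. auto.
    + destruct (get_bound (F ++ BSub Top :: E) X) eqn:Hg; simpl in H; [injection H as <- | discriminate].
      destruct (IH _ _ Hg) as [[-> ->] | (X' & HX' & HgX')]; [left; auto|].
      right. exists (S X'). split.
      * pose proof (tsubst_tshift_comm (TVar X) 0 (ntv F) W ltac:(lia)) as Hc.
        simpl in Hc. rewrite HX' in Hc. exact Hc.
      * simpl. rewrite HgX'. simpl. rewrite tsubst_tshift_comm by lia. reflexivity.
  - apply IH; auto.
Qed.

Lemma algsub_subst_top E0 A B : algsub E0 A B -> forall F E W,
  E0 = F ++ BSub Top :: E -> wf_typ true (ntv E) W ->
  algsub (env_subst W F ++ E) (tsubst A (ntv F) W) (tsubst B (ntv F) W).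
Proof.
  induction 1 as [E0 S HE HS | E0 X HE HX | E0 X U T HU HUT IH | E0 S1 S2 T1 T2 _ IH1 _ IH2
                 | E0 S T T' _ IH | E0 S0 S1 T0 T1 _ IH1 _ IH2 | E0 S0 S1 T0 T1 _ IH1 _ IH2];
    intros F E W -> HW.
  - apply algsub_top; [apply wf_env_subst; auto |].
    rewrite ntv_app, ntv_env_subst in *; simpl in HS.
    apply wf_typ_tsubst; [rewrite plus_n_Sm |]; auto.
  - apply algsub_refl; [apply wf_env_subst; auto |].
    rewrite ntv_app, ntv_env_subst in *; simpl in HX.
    apply (wf_typ_tsubst _ (TVar X)); [simpl; lia | auto].
  - destruct (get_bound_subst W _ _ _ _ HU) as [[-> ->] | (X' & HX' & HgX')].
    + rewrite (algsub_Top_inv _ _ HUT). simpl tsubst at 2.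
      destruct (algsub_regular _ _ _ HUT) as [HE _].
      apply algsub_top; [apply wf_env_subst; auto |].
      rewrite ntv_app, ntv_env_subst. apply wf_typ_tsubst; [simpl; lia | auto].
    + rewrite HX'. eapply algsub_tvar; eauto.
  - apply algsub_arrow; eauto.
  - apply algsub_all_fun, (IH (BSub S :: F)); auto.
  - apply algsub_all_loc; [eauto | apply (IH2 (BSub S0 :: F)); auto].
  - apply algsub_all_top; [eauto | apply (IH2 (BSub Top :: F)); auto].
Qed.

Lemma algsub_subT E S T : algsub E S T -> wf_env false E ->
  wf_typ false (ntv E) S -> wf_typ false (ntv E) T -> subT E S T.
Proof.
  induction 1 as [| | E X U T HU _ IH | | | |]; intros HE HS HT; simpl in *.
  - apply subT_top; auto.
  - apply subT_refl; auto.
  - apply subT_trans with U; [apply subT_var; auto |].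
    apply IH; auto. eapply get_bound_wf; eauto.
  - apply subT_arrow; intuition.
  - destruct HS as [[? | ?] _]; discriminate.
  - destruct HS as [[? | ?] _]; discriminate.
  - apply subT_all_top; intuition.
Qed.

Lemma algsub_expose_Arr E M S1 T : algsub E M (Arr S1 T) -> wf_env false E ->
  wf_typ false (ntv E) M ->
  exists A B, wf_typ false (ntv E) A /\ wf_typ false (ntv E) B /\
    subT E M (Arr A B) /\ algsub E S1 A /\ algsub E B T.
Proof.
  intros H. remember (Arr S1 T) as R eqn:HR.
  induction H as [| | E X U R HU _ IH | E A B S1' T' HS1A _ HBT _ | | |];
    intros HE HM; try discriminate.
  - destruct IH as (A & B & HA & HB & HUAB & HS1A & HBT); auto.
    { eapply get_bound_wf; eauto. }
    exists A, B. repeat split; auto.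
    apply subT_trans with U; [apply subT_var |]; auto.
  - injection HR as -> ->. simpl in HM.
    exists A, B. repeat split; try tauto.
    apply subT_refl; simpl; auto.
Qed.

Lemma algsub_expose_All E M S1 T : algsub E M (All QT S1 T) -> wf_env false E ->
  wf_typ false (ntv E) M ->
  exists A0 A1, wf_typ false (ntv E) A0 /\ wf_typ false (S (ntv E)) A1 /\
    subT E M (All QT A0 A1) /\ algsub E S1 A0 /\ algsub (BSub Top :: E) A1 T.
Proof.
  intros H. remember (All QT S1 T) as R eqn:HR.
  induction H as [| | E X U R HU _ IH | | | E S0 A1 T0 T1 _ _ _ _ | E A0 A1 T0 T1 HS1A0 _ HA1T _];
    intros HE HM; try discriminate.
  - destruct IH as (A0 & A1 & HA0 & HA1 & HUA & HS1A & HAT); auto.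
    { eapply get_bound_wf; eauto. }
    exists A0, A1. repeat split; auto.
    apply subT_trans with U; [apply subT_var |]; auto.
  - simpl in HM. destruct HM as [[? | ?] _]; discriminate.
  - injection HR as -> ->. simpl in HM.
    exists A0, A1. repeat split; try tauto.
    apply subT_refl; simpl; auto.
Qed.

Lemma typK_regular E t T : typK E t T -> wf_env true E /\ wf_typ true (ntv E) T.
Proof.
  induction 1 as [E HE | E x T HE Hx | E t T T' _ _ HTT' | E S1 t T _ IH
                 | E t s S1 T _ IH _ _ | E S1 t T _ IH | E t S1 S' T _ IH HS'].
  - simpl; auto.
  - split; [|eapply get_var_wf]; eauto.
  - apply subK_algsub, algsub_regular in HTT'; tauto.
  - simpl in *; tauto.
  - simpl in *; tauto.
  - simpl in *; tauto.
  - apply subK_algsub, algsub_regular in HS'. simpl in IH.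
    split; [tauto |]. apply (wf_typ_tsubst _ _ 0); tauto.
Qed.

Lemma typK_algsub_refl E t T : typK E t T -> algsub E T T.
Proof. intros H. apply typK_regular in H. apply algsub_refl; tauto. Qed.

Lemma algsub_subK_trans E S T U : algsub E S T -> subK E T U -> algsub E S U.
Proof. intros HST HTU. exact (algsub_trans _ _ _ _ HST (subK_algsub _ _ _ HTU)). Qed.

Lemma typK_top_inv E U : typK E ttop U -> algsub E Top U.
Proof.
  intros H. remember ttop as t eqn:Ht.
  induction H as [E HE | | E t T T' _ IH HTT' | | | |]; try discriminate.
  - apply algsub_top; simpl; auto.
  - eapply algsub_subK_trans; eauto.
Qed.

Lemma typK_var_inv E x U : typK E (var x) U ->
  exists T, get_var E x = Some T /\ algsub E T U.
Proof.
  intros H. remember (var x) as t eqn:Ht.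
  induction H as [| E y T HE Hy | E t T T' _ IH HTT' | | | |]; try discriminate.
  - injection Ht as ->. exists T. split; [exact Hy | eapply typK_algsub_refl, typK_var; eauto].
  - destruct IH as (T0 & Hx & HT0); auto. exists T0. split; [exact Hx | eapply algsub_subK_trans; eauto].
Qed.

Lemma typK_abs_inv E S b U : typK E (abs S b) U ->
  exists T, typK (BVar S :: E) b T /\ algsub E (Arr S T) U.
Proof.
  intros H. remember (abs S b) as t eqn:Ht.
  induction H as [| | E t T T' _ IH HTT' | E S' b' T Hb _ | | |]; try discriminate.
  - destruct IH as (T0 & Hb & HT0); auto. exists T0. split; [exact Hb | eapply algsub_subK_trans; eauto].
  - injection Ht as -> ->. exists T. split; [exact Hb | eapply typK_algsub_refl, typK_abs; eauto].
Qed.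

Lemma typK_tabs_inv E S b U : typK E (tabs S b) U ->
  exists T, typK (BSub S :: E) b T /\ algsub E (All QK S T) U.
Proof.
  intros H. remember (tabs S b) as t eqn:Ht.
  induction H as [| | E t T T' _ IH HTT' | | | E S' b' T Hb _ |]; try discriminate.
  - destruct IH as (T0 & Hb & HT0); auto. exists T0. split; [exact Hb | eapply algsub_subK_trans; eauto].
  - injection Ht as -> ->. exists T. split; [exact Hb | eapply typK_algsub_refl, typK_tabs; eauto].
Qed.

Lemma typK_app_inv E t1 t2 U : typK E (app t1 t2) U ->
  exists S T, typK E t1 (Arr S T) /\ typK E t2 S /\ algsub E T U.
Proof.
  intros H. remember (app t1 t2) as t eqn:Ht.
  induction H as [| | E t T T' _ IH HTT' | | E t' s S T H1 _ H2 _ | |]; try discriminate.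
  - destruct IH as (S & T0 & H1 & H2 & HT0); auto.
    exists S, T0. repeat split; [exact H1 | exact H2 | eapply algsub_subK_trans; eauto].
  - injection Ht as -> ->. exists S, T. repeat split; [exact H1 | exact H2 |].
    apply typK_regular in H1 as [HE [_ HT]]. apply algsub_refl; auto.
Qed.

Lemma typK_tapp_inv E t1 S' U : typK E (tapp t1 S') U ->
  exists S T, typK E t1 (All QT S T) /\ subK E S' S /\ algsub E (tsubst T 0 S') U.
Proof.
  intros H. remember (tapp t1 S') as t eqn:Ht.
  induction H as [| | E t T T' _ IH HTT' | | | | E t S S'' T H1 _ HS]; try discriminate.
  - destruct IH as (S & T0 & H1 & HS & HT0); auto.
    exists S, T0. repeat split; [exact H1 | exact HS | eapply algsub_subK_trans; eauto].
  - injection Ht as -> ->. exists S, T. repeat split; [exact H1 | exact HS |].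
    eapply typK_algsub_refl, typK_tapp; eauto.
Qed.

Definition checks (E : env) (t : trm) : Prop :=
  forall T, wf_typ false (ntv E) T -> typK E t T -> typT E t T.

Definition synthesizes (E : env) (t : trm) : Prop :=
  forall U, typK E t U ->
  exists M, wf_typ false (ntv E) M /\ typT E t M /\ algsub E M U.

Lemma synthesizes_checks E t : wf_env false E -> synthesizes E t -> checks E t.
Proof.
  intros HE Hs T HT HK. destruct (Hs _ HK) as (M & HM & HtM & HMT).
  apply typT_sub with M; [exact HtM | apply algsub_subT; auto].
Qed.

Lemma synthesizes_top E : wf_env false E -> synthesizes E ttop.
Proof.
  intros HE U HK. exists Top. split; [exact I | split; [apply typT_top; auto | apply typK_top_inv; auto]].
Qed.

Lemma synthesizes_var E x : wf_env false E -> synthesizes E (var x).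
Proof.
  intros HE U HK. destruct (typK_var_inv _ _ _ HK) as (T & Hx & HTU).
  exists T. split; [eapply get_var_wf; eauto | split; [apply typT_var; auto | exact HTU]].
Qed.

Lemma synthesizes_app E t1 t2 : wf_env false E ->
  synthesizes E t1 -> checks E t2 -> synthesizes E (app t1 t2).
Proof.
  intros HE Hs1 Hc2 U HK.
  destruct (typK_app_inv _ _ _ _ HK) as (S & T & HK1 & HK2 & HTU).
  destruct (Hs1 _ HK1) as (M & HM & Ht1 & HMST).
  destruct (algsub_expose_Arr _ _ _ _ HMST HE HM) as (A & B & HA & HB & HMAB & HSA & HBT).
  exists B. split; [exact HB | split].
  - apply typT_app with A; [apply typT_sub with M; auto |].
    apply Hc2; [exact HA |]. apply typK_sub with S; [exact HK2 | apply algsub_subK, HSA].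
  - eapply algsub_trans; eauto.
Qed.

Lemma synthesizes_tapp E t1 S' : wf_env false E -> wf_typ false (ntv E) S' ->
  synthesizes E t1 -> synthesizes E (tapp t1 S').
Proof.
  intros HE HS' Hs1 U HK.
  destruct (typK_tapp_inv _ _ _ _ HK) as (S & T & HK1 & HS'S & HTU).
  destruct (Hs1 _ HK1) as (M & HM & Ht1 & HMST).
  destruct (algsub_expose_All _ _ _ _ HMST HE HM) as (A0 & A1 & HA0 & HA1 & HMA & HSA0 & HA1T).
  exists (tsubst A1 0 S'). split; [apply (wf_typ_tsubst _ _ 0); auto | split].
  - apply typT_tapp with A0; [apply typT_sub with M; auto |].
    apply algsub_subT; auto. eapply algsub_trans; [apply subK_algsub |]; eauto.
  - eapply algsub_trans; [| exact HTU].
    apply (algsub_subst_top _ _ _ HA1T [] E S' eq_refl), wf_typ_allowK, HS'.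
Qed.

Lemma checks_abs E S b : wf_env false E -> wf_typ false (ntv E) S ->
  checks (BVar S :: E) b -> checks E (abs S b).
Proof.
  intros HE HS Hc T HT HK.
  destruct (typK_abs_inv _ _ _ _ HK) as (T' & Hb & HST).
  inversion HST as [? ? HEt HST' | | | ? ? S2 ? T2 HS2 HT'T2 | | |]; subst.
  - apply typT_sub with (Arr S Top); [apply typT_abs, Hc; [exact I |] | apply subT_top; simpl; auto].
    apply typK_sub with T'; [exact Hb |]. apply subK_top; simpl in *; tauto.
  - simpl in HT. apply typT_sub with (Arr S T2).
    + apply typT_abs, Hc; [simpl; tauto |]. apply typK_sub with T'; [exact Hb |].
      apply algsub_subK, (algsub_weaken_var _ _ _ HT'T2 [] E S eq_refl), wf_typ_allowK, HS.
    + apply subT_arrow; [apply algsub_subT; tauto | apply subT_refl; tauto].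
Qed.

Lemma checks_tabs E S b : wf_env false E -> wf_typ false (ntv E) S ->
  checks (BSub S :: E) b -> checks E (tabs S b).
Proof.
  intros HE HS Hc T HT HK.
  destruct (typK_tabs_inv _ _ _ _ HK) as (T' & Hb & HST).
  inversion HST as [? ? HEt HST' | | | | ? ? ? ? ? | ? ? ? T0 T1 HT0 HT'T1 |]; subst.
  - apply typT_sub with (All QT S Top); [apply typT_tabs, Hc; [exact I |] | apply subT_top; simpl; auto].
    apply typK_sub with T'; [exact Hb |]. apply subK_top; simpl in *; tauto.
  - simpl in HT. destruct HT as [[? | ?] _]; discriminate.
  - simpl in HT. apply typT_sub with (All QT S T1).
    + apply typT_tabs, Hc; [simpl; tauto |].
      apply typK_sub with T'; [exact Hb | apply algsub_subK, HT'T1].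
    + apply subT_all_top; [apply algsub_subT; tauto | apply subT_refl; simpl; tauto].
Qed.

Definition neutral (t : trm) : Prop :=
  match t with abs _ _ | tabs _ _ => False | _ => True end.

Lemma beta_normal_app_inv t1 t2 : beta_normal (app t1 t2) ->
  beta_normal t1 /\ beta_normal t2 /\ (neutral t1 \/ exists S b, t1 = tabs S b).
Proof. destruct t1; simpl; intuition eauto. Qed.

Lemma beta_normal_tapp_inv t1 S : beta_normal (tapp t1 S) ->
  beta_normal t1 /\ (neutral t1 \/ exists S' b, t1 = abs S' b).
Proof. destruct t1; simpl; intuition eauto. Qed.

Lemma beta_normal_checks_synthesizes t : forall E, wf_env false E ->
  wf_trm false (ntv E) (nv E) t -> beta_normal t ->
  checks E t /\ (neutral t -> synthesizes E t).
Proof.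
  induction t as [| x | S b IH | S b IH | t1 IH1 t2 IH2 | t1 IH1 S];
    intros E HE Hwf Hbn; simpl in Hwf.
  - split; [apply synthesizes_checks |]; auto using synthesizes_top.
  - split; [apply synthesizes_checks |]; auto using synthesizes_var.
  - split; [| contradiction]. apply checks_abs; try tauto.
    apply IH; simpl; tauto.
  - split; [| contradiction]. apply checks_tabs; try tauto.
    apply IH; simpl; tauto.
  - enough (Hs : synthesizes E (app t1 t2)) by (split; [apply synthesizes_checks |]; auto).
    apply beta_normal_app_inv in Hbn as (Hb1 & Hb2 & [Hn1 | (S & b & ->)]).
    + apply synthesizes_app; [exact HE | apply IH1 | apply IH2]; tauto.
    + intros U HK. destruct (typK_app_inv _ _ _ _ HK) as (? & ? & HK1 & _).
      destruct (typK_tabs_inv _ _ _ _ HK1) as (? & _ & Hsub). inversion Hsub.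
  - enough (Hs : synthesizes E (tapp t1 S)) by (split; [apply synthesizes_checks |]; auto).
    apply beta_normal_tapp_inv in Hbn as (Hb1 & [Hn1 | (S' & b & ->)]).
    + apply synthesizes_tapp; [exact HE | tauto | apply IH1; tauto].
    + intros U HK. destruct (typK_tapp_inv _ _ _ _ HK) as (? & ? & HK1 & _).
      destruct (typK_abs_inv _ _ _ _ HK1) as (? & _ & Hsub). inversion Hsub.
Qed.

Theorem proposition7p3 (Theta : env) (t : trm) (T : typ) :
  wf_env false Theta ->
  wf_trm false (ntv Theta) (nv Theta) t ->
  beta_normal t ->
  wf_typ false (ntv Theta) T ->
  typK Theta t T ->
  typT Theta t T.
Proof.
  intros HE Hwf Hbn.
  exact (proj1 (beta_normal_checks_synthesizes t Theta HE Hwf Hbn) T).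
Qed.
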